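(* Let $\mathscr{A}\in\mathbb{R}^{n\times n\times n_3}$, $\mathscr{V}\in\mathbb{R}^{n\times s\times n_3}$, and suppose $m$ steps of the tensor tubal-global Arnoldi process described in the context have been run (without breakdown). Then $$\mathscr{A}\star\mathbb{V}_m=\mathbb{V}_m\star(\mathscr{H}_m\circledast\mathscr{I}_{ssn_3})+\mathscr{V}_{m+1}\star((\mathbf{h}_{m+1,m}\star\mathscr{E}_m)\circledast\mathscr{I}_{ssn_3}),$$ $$\mathbb{V}_m^T\diamondsuit(\mathscr{A}\star\mathbb{V}_m)=\mathscr{H}_m,\qquad \mathscr{A}\star\mathbb{V}_m=\mathbb{V}_{m+1}\star(\widetilde{\mathscr{H}}_m\circledast\mathscr{I}_{ssn_3}),$$ $$\mathbb{V}_{m+1}^T\diamondsuit(\mathscr{A}\star\mathbb{V}_m)=\widetilde{\mathscr{H}}_m,\qquad \mathbb{V}_m^T\diamondsuit\mathbb{V}_m=\mathscr{I}_{mmn_3}.$$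
   Context: All tensors are real third-order arrays. $\widehat{\mathscr{A}}=\mathscr{A}\times_3F_{n_3}$ denotes the tensor obtained by applying the discrete Fourier transform ($F_{n_3}$ with entries $\omega^{(i-1)(j-1)}$, $\omega=e^{-2\pi\mathrm{i}/n_3}$) to each tube; its frontal slices $\hat A^{(k)}$ are the Fourier slices. T-product: $\mathscr{A}\star\mathscr{B}$ has Fourier slices $\hat A^{(k)}\hat B^{(k)}$. Transpose $\mathscr{A}^T$: transpose each frontal slice and reverse the order of frontal slices $2,\dots,n_3$. $\mathscr{I}_{nnn_3}$: first frontal slice $I_n$, others zero. A tube is an element of $\mathbb{R}^{1\times1\times n_3}$; $\mathbf{e}$ has entries $(1,0,\dots,0)$, $\mathbf{o}$ is the zero tube. For a tube $\mathbf{a}$, $\mathbf{a}\divideontimes\mathscr{B}$ has $(i,j)$ tube $\mathbf{a}\star\mathscr{B}(i,j,:)$. T-Kronecker product $\mathscr{A}\circledast\mathscr{B}$: Fourier slices $\hat A^{(k)}\otimes\hat B^{(k)}$. T-trace: tube whose $k$-th Fourier slice is the trace of the $k$-th Fourier slice. Tubal inner product $\langle\mathscr{X},\mathscr{Y}\rangle_T=\text{T-trace}(\mathscr{X}^T\star\mathscr{Y})$. T-diamond product: for $\mathscr{X}=[\mathscr{X}_1,\dots,\mathscr{X}_p]$, $\mathscr{Y}=[\mathscr{Y}_1,\dots,\mathscr{Y}_\ell]$ with blocks in $\mathbb{R}^{n\times s\times n_3}$ (concatenated along mode 2), $\mathscr{X}^T\diamondsuit\mathscr{Y}\in\mathbb{R}^{p\times\ell\times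 n_3}$ has $(i,j)$ tube $\langle\mathscr{X}_i,\mathscr{Y}_j\rangle_T$. Normalization of $\mathscr{W}$: $\mathbf{a}$ is the tube with $k$-th Fourier coefficient $\|\hat W^{(k)}\|_F$ and $\mathscr{Q}$ has Fourier slices $\hat W^{(k)}/\|\hat W^{(k)}\|_F$; output $[\mathscr{Q},\mathbf{a}]$. Tubal-global Arnoldi process: $[\mathscr{V}_1,\mathbf{r}_{1,1}]=\mathrm{Normalization}(\mathscr{V})$; for $j=1,\dots,m$: $\mathscr{W}=\mathscr{A}\star\mathscr{V}_j$; for $i=1,\dots,j$: $\mathbf{h}_{i,j}=\langle\mathscr{V}_i,\mathscr{W}\rangle_T$, $\mathscr{W}\leftarrow\mathscr{W}-\mathbf{h}_{i,j}\divideontimes\mathscr{V}_i$; then $[\mathscr{V}_{j+1},\mathbf{h}_{j+1,j}]=\mathrm{Normalization}(\mathscr{W})$. Notation: $\mathbb{V}_m=[\mathscr{V}_1,\dots,\mathscr{V}_m]\in\mathbb{R}^{n\times sm\times n_3}$, $\mathbb{V}_{m+1}=[\mathbb{V}_m,\mathscr{V}_{m+1}]$, $\mathscr{A}\star\mathbb{V}_m=[\mathscr{A}\star\mathscr{V}_1,\dots,\mathscr{A}\star\mathscr{V}_m]$. $\widetilde{\mathscr{H}}_m\in\mathbb{R}^{(m+1)\times m\times n_3}$ is the Hessenberg tensor whose $(i,j)$ tube is $\mathbf{h}_{i,j}$ for $i\le j+1$ and $\mathbf{o}$ otherwise; $\mathscr{H}_m\in\mathbb{R}^{m\times m\times n_3}$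 is obtained by deleting its last horizontal slice; $\mathscr{E}_m=[\mathbf{o},\dots,\mathbf{o},\mathbf{e}]\in\mathbb{R}^{1\times m\times n_3}$. *)

From mathcomp Require Import all_boot all_algebra.
From mathcomp Require Import complex mxtens.
From mathcomp Require Import reals trigo.

Set Implicit Arguments.
Unset Strict Implicit.
Unset Printing Implicit Defensive.

Import GRing.Theory Num.Theory.
Local Open Scope ring_scope.

Section Tensors.
Variable R : realType.
Local Notation C := (R[i]).

(* A real third-order tensor in R^{p x q x n3}, given by its frontal slices. *)
Definition tensor (p q n3 : nat) := 'I_n3 -> 'M[R]_(p, q).
Definition tube (n3 : nat) := tensor 1 1 n3.

Variable n3 : nat.

Definition omega : C :=
  Complex (cos (2 * pi / n3%:R)) (- sin (2 * pi / n3%:R)).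

(* Fourier slices: \hat A^{(k)} = sum_j omega^{k j} A^{(j)} (DFT along tubes;
   0-based indices, so F_{n3} has entries omega^{(i-1)(j-1)}). *)
Definition fft p q (A : tensor p q n3) (k : 'I_n3) : 'M[C]_(p, q) :=
  \sum_(j < n3) omega ^+ (k * j) *: map_mx (fun x : R => (x%:C)%C) (A j).

(* Inverse DFT, returning the real tensor whose Fourier slices are F
   (F is conjugate-symmetric in all uses below, so the result is real). *)
Definition ifft p q (F : 'I_n3 -> 'M[C]_(p, q)) : tensor p q n3 :=
  fun j => map_mx (@complex.Re R)
    ((n3%:R)^-1 *: \sum_(k < n3) (omega ^+ (k * j))^-1 *: F k).

Definition tprod p q r (A : tensor p q n3) (B : tensor q r n3) : tensor p r n3 :=
  ifft (fun k => fft A k *m fft B k).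

Definition tadd p q (A B : tensor p q n3) : tensor p q n3 := fun k => A k + B k.
Definition topp p q (A : tensor p q n3) : tensor p q n3 := fun k => - A k.
Definition tzero p q : tensor p q n3 := fun _ => 0.

(* index k |-> (n3 - k) mod n3 : reverses the frontal slices 2..n3 *)
Definition revk (k : 'I_n3) : 'I_n3 :=
  Ordinal (ltn_pmod (n3 - k) (leq_ltn_trans (leq0n k) (ltn_ord k))).

Definition ttr p q (A : tensor p q n3) : tensor q p n3 :=
  fun k => (A (revk k))^T.

Definition tid p : tensor p p n3 :=
  fun k => if val k == 0%N then 1%:M else 0.

Definition te : tube n3 := tid 1.
Definition to : tube n3 := tzero 1 1.

Definition tubeof p q (B : tensor p q n3) i j : tube n3 :=
  fun k => (B k i j)%:M.
Definition of_tubes p q (f : 'I_p -> 'I_q -> tube n3) : tensor p q n3 :=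
  fun k => \matrix_(i, j) f i j k 0 0.

Definition tscal p q (a : tube n3) (B : tensor p q n3) : tensor p q n3 :=
  of_tubes (fun i j => tprod a (tubeof B i j)).

Definition tkron p q r s (A : tensor p q n3) (B : tensor r s n3)
  : tensor (p * r) (q * s) n3 :=
  ifft (fun k => fft A k *t fft B k).

Definition ttrace p (A : tensor p p n3) : tube n3 :=
  ifft (fun k => (\tr (fft A k))%:M).

Definition tinner p q (X Y : tensor p q n3) : tube n3 :=
  ttrace (tprod (ttr X) Y).

(* Concatenation along mode 2 of blocks X_1, ..., X_l (1-based family). *)
Definition tconcat p s (X : nat -> tensor p s n3) (l : nat)
  : tensor p (l * s) n3 :=
  fun k => \matrix_(i, c)
    X (mxtens_unindex c).1.+1 k i (mxtens_unindex c).2.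

(* j-th block (0-based) of a tensor concatenated from blocks of width s *)
Definition tblock p l s (X : tensor p (l * s) n3) (j : 'I_l) : tensor p s n3 :=
  fun k => \matrix_(i, c) X k i (mxtens_index (j, c)).

Definition tdiamond p s l1 l2 (X : tensor p (l1 * s) n3)
  (Y : tensor p (l2 * s) n3) : tensor l1 l2 n3 :=
  of_tubes (fun i j => tinner (tblock X i) (tblock Y j)).

Definition frobC p q (M : 'M[C]_(p, q)) : R :=
  Num.sqrt (\sum_(i < p) \sum_(j < q)
              ((complex.Re (M i j)) ^+ 2 + (complex.Im (M i j)) ^+ 2)).

(* Normalization(W) = [Q, a] *)
Definition normQ p q (W : tensor p q n3) : tensor p q n3 :=
  ifft (fun k => ((frobC (fft W k))^-1)%:C%C *: fft W k).
Definition norma p q (W : tensor p q n3) : tube n3 :=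
  ifft (fun k => ((frobC (fft W k))%:C%C)%:M).

Definition tcastr p p' q (e : p = p') (A : tensor p q n3) : tensor p' q n3 :=
  fun k => castmx (e, erefl q) (A k).

(* m steps of the tubal-global Arnoldi process applied to (A, V0), without
   breakdown, produce the blocks V (1-based: V 1, ..., V (m+1)) and the tubes
   h i j.  W j i is the vector W in the inner loop of step j after i
   orthogonalisations (modified Gram-Schmidt). *)
Definition tubal_global_arnoldi n s (A : tensor n n n3) (V0 : tensor n s n3)
  (m : nat) (V : nat -> tensor n s n3) (h : nat -> nat -> tube n3) : Prop :=
  exists W : nat -> nat -> tensor n s n3,
  [/\ (forall k, frobC (fft V0 k) != 0),
      V 1%N = normQ V0,
      (forall j, (1 <= j <= m)%N -> W j 0%N = tprod A (V j)),
      (forall j i, (1 <= j <= m)%N -> (1 <= i <= j)%N ->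
          h i j = tinner (V i) (W j i.-1) /\
          W j i = tadd (W j i.-1) (topp (tscal (h i j) (V i)))) &
      (forall j, (1 <= j <= m)%N ->
          [/\ forall k, frobC (fft (W j j) k) != 0,
              V j.+1 = normQ (W j j) & h j.+1 j = norma (W j j)])].

Definition Htilde (h : nat -> nat -> tube n3) (m : nat) : tensor (m + 1) m n3 :=
  of_tubes (fun i j => if (i <= j.+1)%N then h i.+1 j.+1 else to).
Definition Hm (h : nat -> nat -> tube n3) (m : nat) : tensor m m n3 :=
  fun k => usubmx (Htilde h m k).
Definition Em (m : nat) : tensor 1 m n3 :=
  of_tubes (fun _ j => if val j == m.-1 then te else to).

End Tensors.

Arguments tid {R n3} p.
Arguments Em {R n3} m.
Arguments te {R n3}.
Arguments to {R n3}.
Arguments tzero {R n3 p q}.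

From mathcomp Require Import all_boot all_order all_algebra.
From mathcomp Require Import complex mxtens.
From mathcomp Require Import reals trigo.
From mathcomp Require Import lra ring zify.

(* Taking the DFT along the tubes turns each tubal operation into the
   corresponding operation on the Fourier slices: the t-product, T-Kronecker
   product, T-trace and transpose become the matrix product, Kronecker product,
   trace and conjugate transpose, so the tubal inner product becomes, slice by
   slice, the Frobenius inner product tr(X^H Y).  Hence for every frequency k
   the slices of the V_j and h_ij are produced by the classical global Arnoldi
   process run on the k-th slice of A: modified Gram-Schmidt makes the slices
   of V_1, ..., V_(m+1) orthonormal, and telescoping the orthogonalisation steps
   gives A V_j = sum_(i <= j+1) h_ij V_i slicewise.  Read blockwise, these two
   facts are the five identities on each slice, and the DFT is injective. *)

Set Implicit Arguments.
Unset Strict Implicit.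
Unset Printing Implicit Defensive.

Import Order.TTheory GRing.Theory Num.Theory.
Local Open Scope ring_scope.

Section UnityRoots.
Variable F : fieldType.

Lemma sum_expr_unity_root n (w : F) :
  w ^+ n = 1 -> w != 1 -> \sum_(k < n) w ^+ k = 0.
Proof.
move=> wn1 w_neq1; apply/eqP; have := subrX1 w n.
by rewrite wn1 subrr => /esym/eqP; rewrite mulf_eq0 subr_eq0 (negbTE w_neq1).
Qed.

Lemma prim_root_orthogonal n (z : F) (i j : 'I_n) : n.-primitive_root z ->
  \sum_(k < n) z ^+ (k * i) / z ^+ (k * j) = if i == j then n%:R else 0.
Proof.
move=> prim_z; have zj_neq0 : z ^+ j != 0.
  by rewrite expf_neq0 // (prim_root_eq0 prim_z) -lt0n (leq_ltn_trans _ (ltn_ord i)).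
under eq_bigr => k _ do rewrite !(mulnC k) !exprM -exprVn -exprMn.
case: eqP => [-> | /eqP i_neq_j].
  rewrite divff // (eq_bigr (fun=> 1)) => [|k _]; last by rewrite expr1n.
  by rewrite sumr_const card_ord.
apply: sum_expr_unity_root.
  rewrite exprMn exprVn -!exprM !(mulnC _ n) !exprM (prim_expr_order prim_z).
  by rewrite !expr1n invr1 mulr1.
apply: contra i_neq_j => /eqP/divr1_eq/eqP.
by rewrite (eq_prim_root_expr prim_z) !modn_small.
Qed.

End UnityRoots.

Lemma cos_lt1 (R : realType) (x : R) : 0 < x < pi *+ 2 -> cos x < 1.
Proof.
have cos_lt1_pi y : 0 < y <= pi -> cos y < 1.
  case/andP=> y_gt0 y_le_pi.
  by rewrite -cos0 ltr_cos ?in_itv //= ?lexx ?pi_ge0 ?y_le_pi ?ltW.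
case/andP=> x_gt0 x_lt2pi; have [x_le_pi | pi_lt_x] := leP x pi.
  by apply: cos_lt1_pi; rewrite x_gt0.
rewrite -cosN -cosD2pi; apply: cos_lt1_pi.
by apply/andP; split; rewrite mulr2n in x_lt2pi *; lra.
Qed.

Section KroneckerBlocks.
Variable K : comPzRingType.

Lemma sum_mxtens_index (U : nmodType) p q (F : 'I_(p * q) -> U) :
  \sum_(x < p * q) F x = \sum_(i < p) \sum_(j < q) F (mxtens_index (i, j)).
Proof.
rewrite pair_big (reindex (@mxtens_index p q)) /=; last first.
  by exists (@mxtens_unindex p q) => x _; rewrite (mxtens_indexK, mxtens_unindexK).
by apply: eq_bigr => -[i j].
Qed.

Lemma mulmx_kron1 p l l' s (M : 'M[K]_(p, l * s)) (T : 'M[K]_(l, l')) r j c :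
  (M *m (T *t 1%:M)) r (mxtens_index (j, c))
  = \sum_(i < l) M r (mxtens_index (i, c)) * T i j.
Proof.
rewrite mxE sum_mxtens_index; apply: eq_bigr => i _.
rewrite (bigD1 c) //= big1 => [|c' /negbTE c'_neq]; last first.
  by rewrite tensmxE mxE c'_neq !mulr0.
by rewrite addr0 tensmxE mxE eqxx !mulr1.
Qed.

Lemma mulmx_cast_kron1 p l s (M : 'M[K]_(p, s)) (E : 'M[K]_(1, l)) r j c :
  (M *m castmx (mul1n s, erefl (l * s)) (E *t 1%:M)) r (mxtens_index (j, c))
  = M r c * E 0 j.
Proof.
have cast_index x : cast_ord (esym (mul1n s)) x = mxtens_index (0, x).
  exact: val_inj.
rewrite mxE (bigD1 c) //= big1 => [|x /negbTE x_neq]; last first.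
  by rewrite castmxE /= cast_ord_id cast_index tensmxE mxE x_neq !mulr0.
by rewrite addr0 castmxE /= cast_ord_id cast_index tensmxE mxE eqxx mulr1.
Qed.

End KroneckerBlocks.

(** * The global Arnoldi process in an inner product space *)

Section GlobalArnoldi.
Variables (C : numClosedFieldType) (V : lmodType C) (dot : V -> V -> C).
Hypothesis dotDr : forall x, {morph dot x : y z / y + z}.
Hypothesis dotZr : forall x y a, dot x (a *: y) = a * dot x y.
Hypothesis dotC : forall x y, dot y x = (dot x y)^*.

Variables (a : V -> V) (v : nat -> V) (w : nat -> nat -> V) (h : nat -> nat -> C).
Variable m : nat.

Hypotheses (v1_unit : dot (v 1) (v 1) = 1)
  (w_init : forall j, (0 < j <= m)%N -> w j 0 = a (v j))
  (w_step : forall j i, (0 < j <= m)%N -> (0 < i <= j)%N ->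
     h i j = dot (v i) (w j i.-1) /\ w j i = w j i.-1 - h i j *: v i)
  (v_next : forall j, (0 < j <= m)%N ->
     [/\ dot (v j.+1) (v j.+1) = 1, w j j = h j.+1 j *: v j.+1
       & exists c, v j.+1 = c *: w j j]).

Definition orthonormal_upto j :=
  forall x y, (0 < x <= j)%N -> (0 < y <= j)%N -> dot (v x) (v y) = (x == y)%:R.

Lemma arnoldi_w_orthogonal j i l : (0 < j <= m)%N -> orthonormal_upto j ->
  (i <= j)%N -> (0 < l <= i)%N -> dot (v l) (w j i) = 0.
Proof.
move=> j_range orth; elim: i => [|i IHi] i_lt_j.
  by case/andP => l_gt0 /(leq_trans l_gt0).
have [h_def w_def] := w_step (i := i.+1) j_range i_lt_j.
rewrite w_def /= dotDr -scaleN1r dotZr dotZr mulN1r.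
case/andP => l_gt0; rewrite leq_eqVlt ltnS => /orP[/eqP -> | l_le_i].
  by rewrite -h_def orth ?eqxx ?mulr1 ?subrr ?i_lt_j.
have l_le_j := leq_trans l_le_i (ltnW i_lt_j).
rewrite IHi ?l_gt0 ?(ltnW i_lt_j) // orth ?l_gt0 ?l_le_j //.
by rewrite (ltn_eqF (l_le_i : (l < i.+1)%N)) mulr0 subrr.
Qed.

Lemma arnoldi_orthonormal_succ j : (0 < j <= m)%N ->
  orthonormal_upto j -> orthonormal_upto j.+1.
Proof.
move=> j_range orth.
have v_next_orth l : (0 < l <= j)%N -> dot (v l) (v j.+1) = 0.
  move=> l_range; have [_ _ [c ->]] := v_next j_range.
  by rewrite dotZr (arnoldi_w_orthogonal j_range orth) ?mulr0.
move=> x y /andP[x_gt0]; rewrite leq_eqVlt ltnS => /orP[/eqP -> | x_le_j].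
  case/andP=> y_gt0; rewrite leq_eqVlt ltnS => /orP[/eqP -> | y_le_j].
    by rewrite eqxx; case: (v_next j_range).
  by rewrite dotC v_next_orth ?y_gt0 // conjC0 (gtn_eqF (y_le_j : (y < j.+1)%N)).
case/andP=> y_gt0; rewrite leq_eqVlt ltnS => /orP[/eqP -> | y_le_j].
  by rewrite v_next_orth ?x_gt0 // (ltn_eqF (x_le_j : (x < j.+1)%N)).
by rewrite orth ?x_gt0 ?y_gt0.
Qed.

Lemma global_arnoldi_orthonormal : orthonormal_upto m.+1.
Proof.
suff: forall j, (j <= m)%N -> orthonormal_upto j.+1 by apply.
elim=> [_ | j IHj j_lt_m].
  by case=> [|[|x]] [|[|y]] //=; rewrite ?andbF.
by apply: arnoldi_orthonormal_succ (IHj (ltnW j_lt_m)); rewrite j_lt_m.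
Qed.

Lemma arnoldi_w_telescope j i : (0 < j <= m)%N -> (i <= j)%N ->
  w j 0 = w j i + \sum_(l < i) h l.+1 j *: v l.+1.
Proof.
move=> j_range; elim: i => [|i IHi] i_lt_j; first by rewrite big_ord0 addr0.
have [_ ->] := w_step (i := i.+1) j_range i_lt_j.
by rewrite big_ord_recr /= IHi ?(ltnW i_lt_j) // addrACA addNr addr0.
Qed.

Lemma global_arnoldi_relation j : (0 < j <= m)%N ->
  a (v j) = \sum_(i < j.+1) h i.+1 j *: v i.+1.
Proof.
move=> j_range; rewrite -w_init // (arnoldi_w_telescope j_range (leqnn j)).
by rewrite big_ord_recr /= addrC; case: (v_next j_range) => _ ->.
Qed.

End GlobalArnoldi.

(** * The discrete Fourier transform along tubes *)

Section Fourier.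
Variables (R : realType) (n3 : nat).
Local Notation C := R[i].
Local Notation omega := (@omega R n3).
Local Notation theta := (2 * pi / n3%:R : R).
Local Notation fft := (@fft R n3).

Lemma n3_gt0 (k : 'I_n3) : (0 < n3)%N.
Proof. exact: leq_ltn_trans (leq0n k) (ltn_ord k). Qed.

Lemma omegaX k : omega ^+ k = Complex (cos (k%:R * theta)) (- sin (k%:R * theta)).
Proof.
elim: k => [|k IHk]; first by rewrite expr0 mul0r cos0 sin0 oppr0.
rewrite exprSr IHk /omega; set t := 2 * pi / _.
rewrite -[k.+1]addn1 natrD mulrDl mul1r cosD sinD.
by congr Complex; lra.
Qed.

Lemma omega_prim : (0 < n3)%N -> n3.-primitive_root omega.
Proof.
move=> n3_gt0; apply/andP; split => //; apply/forallP => -[d /= d_lt_n3].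
rewrite unity_rootE omegaX; have [-> | d_neq] := eqVneq d.+1 n3.
  by rewrite mulrC divfK ?pnatr_eq0 -?lt0n // mulr_natl cos2pi sin2pi oppr0 eqxx.
rewrite eqbF_neg; apply/eqP => -[cos_eq1 _].
have n3R_gt0 : 0 < n3%:R :> R by rewrite ltr0n.
have pi2_gt0 : 0 < pi *+ 2 :> R by rewrite mulrn_wgt0 ?pi_gt0.
have x_eq : d.+1%:R * theta = d.+1%:R / n3%:R * pi *+ 2.
  by rewrite -mulr_natl -mulrnAr -mulr_natl; field; rewrite pnatr_eq0 -lt0n.
suff : cos (d.+1%:R * theta) < 1 by rewrite cos_eq1 ltxx.
rewrite x_eq; apply: cos_lt1; rewrite -mulrnAr mulr_gt0 ?divr_gt0 ?ltr0n //=.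
have d_lt : (d.+1 < n3)%N by rewrite ltn_neqAle d_neq.
by rewrite gtr_pMl // ltr_pdivrMr // mul1r ltr_nat.
Qed.

Lemma omega_conjc : conjc omega = omega^-1.
Proof.
apply/esym/mulr1_eq; rewrite /omega; set c := cos _; set s := sin _.
have cs : c ^+ 2 + s ^+ 2 = 1 by apply: cos2Dsin2.
transitivity (Complex (c * c - (- s) * (- - s)) (c * (- - s) + (- s) * c)) => //.
by rewrite opprK mulNr opprK -!expr2 cs mulNr [s * c]mulrC subrr.
Qed.

Lemma conjc_omegaX k : conjc (omega ^+ k) = (omega ^+ k)^-1.
Proof. by rewrite -exprVn -omega_conjc (rmorphXn conjc). Qed.

Lemma revkK : involutive (@revk n3).
Proof.
move=> k; apply: val_inj => /=; have k_lt := ltn_ord k.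
have [-> | k_gt0] := posnP k; first by rewrite subn0 modnn subn0 modnn.
rewrite (@modn_small (n3 - k)) ?ltn_subrL ?k_gt0 ?(n3_gt0 k) //.
by rewrite subKn ?(ltnW k_lt) // modn_small.
Qed.

Lemma omega_revk (k : 'I_n3) l : omega ^+ (revk k * l) = (omega ^+ (k * l))^-1.
Proof.
apply/esym/mulr1_eq; rewrite -exprD -mulnDl -(prim_expr_mod (omega_prim (n3_gt0 k))).
by rewrite -modnMml /= modnDmr subnKC ?(ltnW (ltn_ord k)) // modnn mul0n mod0n expr0.
Qed.

Section ComplexDFT.
Variable V : lmodType C.

Definition cdft (G : 'I_n3 -> V) (k : 'I_n3) : V :=
  \sum_(j < n3) omega ^+ (k * j) *: G j.
Definition cidft (F : 'I_n3 -> V) (j : 'I_n3) : V :=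
  n3%:R^-1 *: \sum_(k < n3) (omega ^+ (k * j))^-1 *: F k.

Lemma sum_scale_delta (G : 'I_n3 -> V) j (a : C) :
  \sum_(l < n3) (if l == j then a else 0) *: G l = a *: G j.
Proof.
by rewrite (bigD1 j) //= eqxx big1 ?addr0 // => l /negbTE ->; rewrite scale0r.
Qed.

Lemma scale_n3K (j : 'I_n3) (v : V) : n3%:R^-1 *: (n3%:R *: v) = v.
Proof. by rewrite scalerA mulVf ?scale1r // pnatr_eq0 -lt0n (n3_gt0 j). Qed.

Lemma cidftK : cancel cdft cidft.
Proof.
move=> G; apply: boolp.funext => j; rewrite /cidft /cdft -[RHS](scale_n3K j).
rewrite -sum_scale_delta; congr (_ *: _).
under eq_bigr => k _ do rewrite scaler_sumr.
rewrite exchange_big; apply: eq_bigr => l _.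
rewrite -(prim_root_orthogonal _ _ (omega_prim (n3_gt0 j))) scaler_suml.
by apply: eq_bigr => k _; rewrite scalerA mulrC.
Qed.

Lemma cdftK : cancel cidft cdft.
Proof.
move=> F; apply: boolp.funext => k; rewrite /cidft /cdft -[RHS](scale_n3K k).
rewrite -sum_scale_delta.
under eq_bigr => j _ do rewrite scalerA mulrC -scalerA scaler_sumr.
rewrite -scaler_sumr exchange_big; congr (_ *: _); apply: eq_bigr => l _.
rewrite eq_sym -(prim_root_orthogonal _ _ (omega_prim (n3_gt0 k))) scaler_suml.
by apply: eq_bigr => j _; rewrite scalerA !(mulnC j).
Qed.

End ComplexDFT.

(* The Fourier slices of a real tensor satisfy X^(n3-k) = conj X^(k); since
   [ifft] discards imaginary parts, [fft (ifft F) = F] only holds for such F. *)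
Definition conj_symmetric p q (F : 'I_n3 -> 'M[C]_(p, q)) :=
  forall k, F (revk k) = map_mx conjc (F k).

Lemma fftE p q (X : tensor R p q n3) :
  fft X = cdft (fun j => map_mx (fun x => x%:C%C) (X j)).
Proof. by []. Qed.

Lemma ifftE p q (F : 'I_n3 -> 'M[C]_(p, q)) :
  ifft F = fun j => map_mx (@complex.Re R) (cidft F j).
Proof. by []. Qed.

Lemma fft_entry p q (X : tensor R p q n3) k i j :
  fft X k i j = \sum_(l < n3) omega ^+ (k * l) * (X l i j)%:C%C.
Proof. by rewrite summxE; apply: eq_bigr => l _; rewrite !mxE. Qed.

Lemma cidft_entry p q (F : 'I_n3 -> 'M[C]_(p, q)) j r c :
  cidft F j r c = n3%:R^-1 * \sum_(k < n3) (omega ^+ (k * j))^-1 * F k r c.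
Proof. by rewrite mxE summxE; congr (_ * _); apply: eq_bigr => k _; rewrite mxE. Qed.

Lemma ifft_fft p q (X : tensor R p q n3) : ifft (fft X) = X.
Proof.
rewrite ifftE fftE cidftK; apply: boolp.funext => j.
by apply/matrixP => r c; rewrite !mxE.
Qed.

Lemma fft_inj p q : injective (fft (p := p) (q := q)).
Proof. exact: can_inj (@ifft_fft p q). Qed.

Lemma cidft_real p q (F : 'I_n3 -> 'M[C]_(p, q)) j r c : conj_symmetric F ->
  ((complex.Re (cidft F j r c))%:C)%C = cidft F j r c.
Proof.
move=> F_sym; suff F_real : conjc (cidft F j r c) = cidft F j r c.
  by move: F_real; case: (cidft F j r c) => a b [b0]; congr Complex; lra.
rewrite !cidft_entry rmorphM /= conjc_inv rmorph_nat rmorph_sum /=; congr (_ * _).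
rewrite [RHS](reindex_inj (can_inj revkK)); apply: eq_bigr => k _.
by rewrite rmorphM /= conjc_inv conjc_omegaX omega_revk invrK F_sym mxE.
Qed.

Lemma fft_ifft p q (F : 'I_n3 -> 'M[C]_(p, q)) :
  conj_symmetric F -> fft (ifft F) = F.
Proof.
move=> F_sym; rewrite -[RHS]cdftK fftE ifftE; congr cdft.
by apply: boolp.funext => j; apply/matrixP => r c; rewrite 2!mxE cidft_real.
Qed.

Lemma fft_conj_symmetric p q (X : tensor R p q n3) : conj_symmetric (fft X).
Proof.
move=> k; apply/matrixP => i j; rewrite mxE !fft_entry rmorph_sum.
by apply: eq_bigr => l _; rewrite omega_revk rmorphM /= oppr0 conjc_omegaX.
Qed.

(** * Fourier slices of the tensor operations *)

Lemma fft_tprod p q r (A : tensor R p q n3) (B : tensor R q r n3) k :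
  fft (tprod A B) k = fft A k *m fft B k.
Proof.
by rewrite fft_ifft // => k'; rewrite !fft_conj_symmetric map_mxM.
Qed.

Lemma fft_tkron p q r s (A : tensor R p q n3) (B : tensor R r s n3) k :
  fft (tkron A B) k = fft A k *t fft B k.
Proof.
by rewrite fft_ifft // => k'; rewrite !fft_conj_symmetric map_mxT.
Qed.

Lemma fft_ttrace p (A : tensor R p p n3) k : fft (ttrace A) k = (\tr (fft A k))%:M.
Proof.
by rewrite fft_ifft // => k'; rewrite fft_conj_symmetric trace_map_mx map_scalar_mx.
Qed.

Lemma frobC_conj p q (M : 'M[C]_(p, q)) : frobC (map_mx conjc M) = frobC M.
Proof.
congr Num.sqrt; apply: eq_bigr => i _; apply: eq_bigr => j _.
by rewrite mxE; case: (M i j) => a b /=; rewrite sqrrN.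
Qed.

Lemma fft_normQ p q (W : tensor R p q n3) k :
  fft (normQ W) k = (frobC (fft W k))^-1%:C%C *: fft W k.
Proof.
rewrite fft_ifft // => k'; rewrite fft_conj_symmetric frobC_conj.
by apply/matrixP => i j; rewrite !mxE rmorphM /= oppr0.
Qed.

Lemma fft_norma p q (W : tensor R p q n3) k :
  fft (norma W) k = (frobC (fft W k))%:C%C%:M.
Proof.
rewrite fft_ifft // => k'; rewrite fft_conj_symmetric frobC_conj.
by rewrite map_scalar_mx /= oppr0.
Qed.

Lemma fft_tadd p q (A B : tensor R p q n3) k : fft (tadd A B) k = fft A k + fft B k.
Proof.
apply/matrixP => i j; rewrite mxE !fft_entry -big_split; apply: eq_bigr => l _.
by rewrite mxE rmorphD mulrDr.
Qed.

Lemma fft_topp p q (A : tensor R p q n3) k : fft (topp A) k = - fft A k.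
Proof.
apply/matrixP => i j; rewrite mxE !fft_entry -sumrN; apply: eq_bigr => l _.
by rewrite mxE rmorphN mulrN.
Qed.

Lemma fft_ttr p q (X : tensor R p q n3) k :
  fft (ttr X) k = (map_mx conjc (fft X k))^T.
Proof.
rewrite -fft_conj_symmetric; apply/matrixP => i j.
rewrite !mxE !fft_entry (reindex_inj (can_inj revkK)); apply: eq_bigr => l _.
by rewrite mxE revkK mulnC !omega_revk mulnC.
Qed.

Lemma fft_tid p (k : 'I_n3) : fft (tid p) k = 1%:M.
Proof.
apply/matrixP => i j; rewrite fft_entry (bigD1 (Ordinal (n3_gt0 k))) //= big1 => [|l].
  by rewrite muln0 expr0 mul1r addr0 !mxE; case: (i == j).
by rewrite -val_eqE /= /tid => /negbTE ->; rewrite mxE mulr0.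
Qed.

Lemma fft_tubeof p q (B : tensor R p q n3) i j k :
  fft (tubeof B i j) k = (fft B k i j)%:M.
Proof.
apply/matrixP => a b; rewrite !ord1 mxE eqxx mulr1n !fft_entry.
by apply: eq_bigr => l _; rewrite mxE eqxx mulr1n.
Qed.

Lemma fft_of_tubes p q (f : 'I_p -> 'I_q -> tube R n3) k :
  fft (of_tubes f) k = \matrix_(i, j) fft (f i j) k 0 0.
Proof.
apply/matrixP => i j; rewrite mxE !fft_entry; apply: eq_bigr => l _.
by rewrite mxE.
Qed.

Lemma fft_tscal p q (a : tube R n3) (B : tensor R p q n3) k :
  fft (tscal a B) k = fft a k 0 0 *: fft B k.
Proof.
apply/matrixP => i j; rewrite fft_of_tubes !mxE fft_tprod fft_tubeof.
by rewrite mul_mx_scalar mxE mulrC.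
Qed.

Lemma fft_tconcat_index p s (X : nat -> tensor R p s n3) l k r (j : 'I_l) c :
  fft (tconcat X l) k r (mxtens_index (j, c)) = fft (X j.+1) k r c.
Proof.
by rewrite !fft_entry; apply: eq_bigr => l' _; rewrite mxE mxtens_indexK.
Qed.

Lemma tblock_tconcat p s (X : nat -> tensor R p s n3) l (j : 'I_l) :
  tblock (tconcat X l) j = X j.+1.
Proof.
apply: boolp.funext => k; apply/matrixP => i c.
by rewrite mxE mxE mxtens_indexK.
Qed.

Lemma fft_tcastr p p' q (e : p = p') (X : tensor R p q n3) k :
  fft (tcastr e X) k = castmx (e, erefl q) (fft X k).
Proof.
apply/matrixP => i c; rewrite castmxE !fft_entry; apply: eq_bigr => l _.
by rewrite castmxE.
Qed.

Lemma fft_to k : fft to k = 0.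
Proof.
by apply/matrixP => i j; rewrite fft_entry big1 ?mxE // => l _; rewrite mxE mulr0.
Qed.

Lemma fft_Htilde (h : nat -> nat -> tube R n3) m k i j :
  fft (Htilde h m) k i j = if (i <= j.+1)%N then fft (h i.+1 j.+1) k 0 0 else 0.
Proof. by rewrite fft_of_tubes mxE; case: ifP => // _; rewrite fft_to mxE. Qed.

Lemma fft_Hm (h : nat -> nat -> tube R n3) m k :
  fft (Hm h m) k = usubmx (fft (Htilde h m) k).
Proof.
apply/matrixP => i c; rewrite mxE !fft_entry; apply: eq_bigr => l _.
by rewrite mxE.
Qed.

Lemma fft_Em m (k : 'I_n3) (j : 'I_m) :
  fft (Em m) k 0 j = (val j == m.-1)%:R.
Proof.
rewrite fft_of_tubes mxE; case: eqP => _; last by rewrite fft_to mxE.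
by rewrite fft_tid mxE.
Qed.

Definition fdot p q (X Y : 'M[C]_(p, q)) : C := \tr ((map_mx conjc X)^T *m Y).

Lemma fft_tinner p q (X Y : tensor R p q n3) k :
  fft (tinner X Y) k = (fdot (fft X k) (fft Y k))%:M.
Proof. by rewrite fft_ttrace fft_tprod fft_ttr. Qed.

Lemma fft_tdiamond p s l1 l2 (X : tensor R p (l1 * s) n3)
    (Y : tensor R p (l2 * s) n3) k i j :
  fft (tdiamond X Y) k i j = fdot (fft (tblock X i) k) (fft (tblock Y j) k).
Proof. by rewrite fft_of_tubes mxE fft_tinner mxE eqxx mulr1n. Qed.

Lemma fdotE p q (X Y : 'M[C]_(p, q)) :
  fdot X Y = \sum_(i < p) \sum_(j < q) conjc (X i j) * Y i j.
Proof.
rewrite /fdot /mxtrace exchange_big; apply: eq_bigr => j _; rewrite mxE.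
by apply: eq_bigr => i _; rewrite !mxE.
Qed.

Lemma fdotDr p q (X : 'M[C]_(p, q)) : {morph fdot X : Y Z / Y + Z}.
Proof. by move=> Y Z; rewrite /fdot mulmxDr mxtraceD. Qed.

Lemma fdot_sumr p q (X : 'M[C]_(p, q)) I (r : seq I) (P : pred I) F :
  fdot X (\sum_(i <- r | P i) F i) = \sum_(i <- r | P i) fdot X (F i).
Proof.
have fdot0r : fdot X 0 = 0 by rewrite /fdot mulmx0 mxtrace0.
exact: (big_morph (fdot X) (fdotDr X) fdot0r).
Qed.

Lemma fdotZr p q (X Y : 'M[C]_(p, q)) a : fdot X (a *: Y) = a * fdot X Y.
Proof. by rewrite /fdot -scalemxAr mxtraceZ. Qed.

Lemma fdotC p q (X Y : 'M[C]_(p, q)) : fdot Y X = conjc (fdot X Y).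
Proof.
rewrite !fdotE rmorph_sum; apply: eq_bigr => i _; rewrite rmorph_sum.
by apply: eq_bigr => j _; rewrite rmorphM /= conjcK mulrC.
Qed.

Lemma fdot_self p q (X : 'M[C]_(p, q)) : fdot X X = (frobC X ^+ 2)%:C%C.
Proof.
rewrite fdotE /frobC sqr_sqrtr ?sumr_ge0 // => [|i _]; last first.
  by apply: sumr_ge0 => j _; rewrite addr_ge0 ?sqr_ge0.
rewrite rmorph_sum; apply: eq_bigr => i _; rewrite rmorph_sum; apply: eq_bigr => j _.
case: (X i j) => a b /=.
transitivity (Complex (a * a - (- b) * b) (a * b + (- b) * a)) => //.
by congr Complex; ring.
Qed.

Lemma fdotZl p q (X Y : 'M[C]_(p, q)) a : fdot (a *: X) Y = conjc a * fdot X Y.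
Proof. by rewrite fdotC fdotZr rmorphM /= -fdotC. Qed.

Lemma fdot_normalize p q (X : 'M[C]_(p, q)) : frobC X != 0 ->
  fdot ((frobC X)^-1%:C%C *: X) ((frobC X)^-1%:C%C *: X) = 1.
Proof.
move=> X_neq0; rewrite fdotZl fdotZr fdot_self conjc_real -!rmorphM.
by rewrite mulrA -expr2 -exprMn mulVf // expr1n.
Qed.

Lemma fft_arnoldi_slices n s m (A : tensor R n n n3) (V0 : tensor R n s n3)
    (V : nat -> tensor R n s n3) (h : nat -> nat -> tube R n3) :
  tubal_global_arnoldi A V0 m V h -> forall k,
  orthonormal_upto (@fdot n s) (fun i => fft (V i) k) m.+1 /\
  forall j, (0 < j <= m)%N ->
    fft A k *m fft (V j) k = \sum_(i < j.+1) fft (h i.+1 j) k 0 0 *: fft (V i.+1) k.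
Proof.
case=> W [V0_neq0 V1_def W_init W_step V_next] k.
have w_init j : (0 < j <= m)%N -> fft (W j 0%N) k = fft A k *m fft (V j) k.
  by move=> j_range; rewrite W_init // fft_tprod.
have w_step j i : (0 < j <= m)%N -> (0 < i <= j)%N ->
    fft (h i j) k 0 0 = fdot (fft (V i) k) (fft (W j i.-1) k) /\
    fft (W j i) k = fft (W j i.-1) k - fft (h i j) k 0 0 *: fft (V i) k.
  move=> j_range i_range; have [-> ->] := W_step j i j_range i_range.
  by rewrite fft_tadd fft_topp fft_tscal !fft_tinner !mxE eqxx mulr1n.
have v_next j : (0 < j <= m)%N ->
    [/\ fdot (fft (V j.+1) k) (fft (V j.+1) k) = 1,
        fft (W j j) k = fft (h j.+1 j) k 0 0 *: fft (V j.+1) k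
      & exists c, fft (V j.+1) k = c *: fft (W j j) k].
  move=> j_range; have [W_neq0 -> ->] := V_next j j_range.
  rewrite fft_normQ fdot_normalize // fft_norma mxE eqxx mulr1n scalerA.
  by rewrite -rmorphM mulfV // scale1r; split => //; eexists.
have v1_unit : fdot (fft (V 1%N) k) (fft (V 1%N) k) = 1.
  by rewrite V1_def fft_normQ fdot_normalize.
pose v i := fft (V i) k; pose w j i := fft (W j i) k; pose hk i j := fft (h i j) k 0 0.
split; first exact: (global_arnoldi_orthonormal (v := v) (w := w) (h := hk)
  (@fdotDr n s) (@fdotZr n s) (@fdotC n s) v1_unit w_step v_next).
exact: (global_arnoldi_relation (a := mulmx (fft A k)) (v := v) (w := w) (h := hk)
  w_init w_step v_next).
Qed.

End Fourier.

(** * The Arnoldi identities *)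

Section TubalArnoldiIdentities.
Variables (R : realType) (n3 n s m : nat).
Variables (A : tensor R n n n3) (V : nat -> tensor R n s n3).
Variable h : nat -> nat -> tube R n3.
Local Notation fft := (@fft R n3).
Local Notation AVm := (tconcat (fun j => tprod A (V j)) m).
Local Notation Vm := (tconcat V m).
Local Notation Vm1 := (tconcat V (m + 1)).

Hypothesis slices : forall k,
  orthonormal_upto (@fdot R n s) (fun i => fft (V i) k) m.+1 /\
  forall j, (0 < j <= m)%N ->
    fft A k *m fft (V j) k = \sum_(i < j.+1) fft (h i.+1 j) k 0 0 *: fft (V i.+1) k.

Lemma fdot_V k (x y : 'I_(m + 1)) :
  fdot (fft (V x.+1) k) (fft (V y.+1) k) = (x == y)%:R.
Proof.
have [orth _] := slices k.
by rewrite orth ?eqSS //= -[m.+1]addn1 ltn_ord.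
Qed.

Lemma fft_AV_Htilde k (j : 'I_m) :
  fft A k *m fft (V j.+1) k = \sum_(l < m + 1) fft (Htilde h m) k l j *: fft (V l.+1) k.
Proof.
have [_ ->] := slices k; last by rewrite /= ltn_ord.
rewrite (big_ord_widen (m + 1) (fun i => fft (h i.+1 j.+1) k 0 0 *: fft (V i.+1) k));
  last by rewrite addn1 !ltnS.
rewrite big_mkcond /=; apply: eq_bigr => i _; rewrite fft_Htilde ltnS.
by case: ifP => //; rewrite scale0r.
Qed.

Lemma fdot_V_AV k (i : 'I_(m + 1)) (j : 'I_m) :
  fdot (fft (V i.+1) k) (fft A k *m fft (V j.+1) k) = fft (Htilde h m) k i j.
Proof.
rewrite fft_AV_Htilde fdot_sumr (bigD1 i) //= fdotZr fdot_V eqxx mulr1 big1 ?addr0 //.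
by move=> l /negbTE l_neq; rewrite fdotZr fdot_V eq_sym l_neq mulr0.
Qed.

Lemma fft_Htilde_last k (j : 'I_m) :
  fft (Htilde h m) k (rshift m (0 : 'I_1)) j
  = fft (h m.+1 m) k 0 0 * (val j == m.-1)%:R.
Proof.
rewrite fft_Htilde /= addn0; have j_lt := ltn_ord j.
case: eqP => [j_eq | j_neq]; last by rewrite ifF ?mulr0 //; apply/negbTE; lia.
have -> : j.+1 = m by lia.
by rewrite leqnn mulr1.
Qed.

Lemma arnoldi_relation_Htilde : AVm = tprod Vm1 (tkron (Htilde h m) (tid s)).
Proof.
apply: fft_inj; apply: boolp.funext => k; apply/matrixP => r c.
case: (mxtens_indexP c) => j c'.
rewrite fft_tconcat_index /= fft_tprod fft_AV_Htilde summxE.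
rewrite fft_tprod fft_tkron fft_tid mulmx_kron1; apply: eq_bigr => l _.
by rewrite mxE fft_tconcat_index mulrC.
Qed.

Lemma tdiamond_Htilde : tdiamond Vm1 AVm = Htilde h m.
Proof.
apply: fft_inj; apply: boolp.funext => k; apply/matrixP => i j.
by rewrite fft_tdiamond !tblock_tconcat fft_tprod fdot_V_AV.
Qed.

Lemma tdiamond_Hm : tdiamond Vm AVm = Hm h m.
Proof.
apply: fft_inj; apply: boolp.funext => k; apply/matrixP => i j.
rewrite fft_tdiamond !tblock_tconcat fft_tprod fft_Hm mxE.
exact: (fdot_V_AV k (lshift 1 i)).
Qed.

Lemma tdiamond_orthonormal : tdiamond Vm Vm = tid m.
Proof.
apply: fft_inj; apply: boolp.funext => k; apply/matrixP => i j.
rewrite fft_tdiamond !tblock_tconcat fft_tid mxE.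
exact: (fdot_V k (lshift 1 i) (lshift 1 j)).
Qed.

Lemma arnoldi_relation_Hm :
  AVm = tadd (tprod Vm (tkron (Hm h m) (tid s)))
             (tprod (V m.+1)
                (tcastr (mul1n s) (tkron (tprod (h m.+1 m) (Em m)) (tid s)))).
Proof.
apply: fft_inj; apply: boolp.funext => k; apply/matrixP => r c.
case: (mxtens_indexP c) => j c'.
rewrite fft_tconcat_index /= fft_tprod fft_AV_Htilde summxE.
rewrite big_split_ord big_ord1 fft_tadd [RHS]mxE; congr (_ + _).
  rewrite fft_tprod fft_tkron fft_Hm fft_tid mulmx_kron1; apply: eq_bigr => l _.
  by rewrite !mxE fft_tconcat_index mulrC.
rewrite fft_Htilde_last !fft_tprod fft_tcastr fft_tkron fft_tid mulmx_cast_kron1.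
by rewrite mxE fft_tprod mxE big_ord1 fft_Em /= addn0 mulrC.
Qed.

End TubalArnoldiIdentities.

Theorem proposition7 (R : realType) (n s n3 m : nat)
  (A : tensor R n n n3) (V0 : tensor R n s n3)
  (V : nat -> tensor R n s n3) (h : nat -> nat -> tube R n3) :
  tubal_global_arnoldi A V0 m V h ->
  let AVm := tconcat (fun j => tprod A (V j)) m in
  let Vm := tconcat V m in
  let Vm1 := tconcat V (m + 1) in
  [/\ AVm = tadd (tprod Vm (tkron (Hm h m) (tid s)))
                 (tprod (V m.+1)
                    (tcastr (mul1n s) (tkron (tprod (h m.+1 m) (Em m)) (tid s)))),
      tdiamond Vm AVm = Hm h m,
      AVm = tprod Vm1 (tkron (Htilde h m) (tid s)),
      tdiamond Vm1 AVm = Htilde h m &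
      tdiamond Vm Vm = tid m].
Proof.
move=> arnoldi; have slices := fft_arnoldi_slices arnoldi.
split.
- exact: arnoldi_relation_Hm slices.
- exact: tdiamond_Hm slices.
- exact: arnoldi_relation_Htilde slices.
- exact: tdiamond_Htilde slices.
- exact: tdiamond_orthonormal slices.
Qed.
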